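(* For every $\bm r\in\mathbb{Z}^N\setminus\{\bm0\}$, the space of derivations of $\mathcal{H}_N'$ of degree $\bm r$ equals $\operatorname{ad}(\mathbb{K}h_{\bm r})$; that is, every derivation $\partial$ of $\mathcal{H}_N'$ with $\partial(\mathbb{K}h_{\bm s})\subseteq\mathbb{K}h_{\bm s+\bm r}$ for all $\bm s\in\mathbb{Z}^N$ is of the form $\operatorname{ad}(c\,h_{\bm r})$ for some $c\in\mathbb{K}$.
   Context: $\mathbb{K}$ is an algebraically closed field of characteristic zero, $N=2m\ge2$ even, $(\cdot,\cdot)$ the bilinear form on $\mathbb{K}^N$ with $(e_i,e_j)=\delta_{ij}$. Let $A_N=\mathbb{K}[t_1^{\pm1},\dots,t_N^{\pm1}]$, $d_i=t_i\frac{\partial}{\partial t_i}$, $t^{\bm r}=t_1^{r_1}\cdots t_N^{r_N}$, $D(u,\bm r)=\sum_i u_it^{\bm r}d_i$. Let $\bm J=\begin{pmatrix} O_m & I_m\\ -I_m & O_m\end{pmatrix}$, $\overline{\bm r}=\bm J\bm r$, $h_{\bm r}=D(\overline{\bm r},\bm r)$ (so $h_{\bm0}=0$). $\mathcal{H}_N'=\operatorname{span}_{\mathbb{K}}\{h_{\bm r}:\bm r\in\mathbb{Z}^N\setminus\{\bm0\}\}$ is the Lie algebra with bracket $[h_{\bm r},h_{\bm s}]=(\overline{\bm r},\bm s)h_{\bm r+\bm s}$, $\mathbb{Z}^N$-graded with degree-$\bm s$ component $\mathbb{K}h_{\bm s}$. *)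

From HB Require Import structures.
From mathcomp Require Import all_boot all_order all_algebra.
Set Implicit Arguments. Unset Strict Implicit. Unset Printing Implicit Defensive.
Import Order.TTheory GRing.Theory Num.Theory.
Local Open Scope ring_scope.

(* Z^N with N = m + m = 2m, realised as integer row vectors. *)
Notation ZN m := 'rV[int]_(m + m).

Definition zform (n : nat) (a b : 'rV[int]_n) : int := \sum_(i < n) a 0 i * b 0 i.

(* rbar = J r with J = [[O, I]; [-I, O]] : (J r) = (r_2, -r_1) where r = (r_1, r_2) *)
Definition Jbar (m : nat) (r : ZN m) : ZN m := row_mx (rsubmx r) (- lsubmx r).

Definition is_HN' (K : fieldType) (m : nat) (L : lmodType K)
    (h : ZN m -> L) (br : L -> L -> L) : Prop :=
  [/\ h 0 = 0,
      forall x : L, exists (s : seq (ZN m)) (c : ZN m -> K),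
        x = \sum_(r <- s) c r *: h r,
      forall (s : seq (ZN m)) (c : ZN m -> K),
        uniq s -> all (fun r => r != 0) s ->
        \sum_(r <- s) c r *: h r = 0 -> forall r, r \in s -> c r = 0,
      (forall (a : K) (x y z : L), br (a *: x + y) z = a *: br x z + br y z) /\
      (forall (a : K) (x y z : L), br z (a *: x + y) = a *: br z x + br z y) &
      forall r s : ZN m, br (h r) (h s) = (zform (Jbar r) s)%:~R *: h (r + s)].

Definition is_derivation (K : fieldType) (L : lmodType K) (br : L -> L -> L)
    (d : L -> L) : Prop :=
  (forall (a : K) (x y : L), d (a *: x + y) = a *: d x + d y) /\
  (forall x y : L, d (br x y) = br (d x) y + br x (d y)).

Definition has_degree (K : fieldType) (m : nat) (L : lmodType K)
    (h : ZN m -> L) (d : L -> L) (r : ZN m) : Prop :=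
  forall s : ZN m, exists a : K, d (h s) = a *: h (s + r).

From HB Require Import structures.
From mathcomp Require Import all_boot all_order all_algebra.
From mathcomp Require Import ring.
Set Implicit Arguments. Unset Strict Implicit. Unset Printing Implicit Defensive.
Import GRing.Theory Num.Theory.
Local Open Scope ring_scope.

(* Write [d (h s) = a s *: h (s + r)] and [W p q = (pbar, q)].  The derivation
   rule becomes the functional equation
     W s t * a (s + t) = a s * W (s + r) t + a t * W s (t + r)   (s + t + r <> 0),
   which is linear in [a] and solved by [a s = c * W r s], i.e. by [ad (c h_r)].
   As [W] is alternating and biadditive, a solution [b] also satisfies
     W s t * (b (s + t) - b s - b t) = b s * W r t - b t * W r s,
   and if [b] vanishes at one [u] with [W r u <> 0] (e.g. [u = rbar], since
   [W r rbar = (rbar, rbar) <> 0]), this identity at the pairs (u, -u),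
   (-u, 2u), (s, u), (s - u, u), (s - u, 2u) spreads the vanishing to every
   [s] with [s + r <> 0].  When [s + r = 0] both maps kill [h s], as [h 0 = 0]. *)

Section AlternatingForm.

Variables (K : fieldType) (V : zmodType) (W : V -> V -> K).
Hypotheses (WDl : forall p q t, W (p + q) t = W p t + W q t)
           (WDr : forall t p q, W t (p + q) = W t p + W t q)
           (Walt : forall p, W p p = 0).

Lemma form0l t : W 0 t = 0.
Proof. by apply: (@addrI _ (W 0 t)); rewrite -WDl !addr0. Qed.

Lemma form0r t : W t 0 = 0.
Proof. by apply: (@addrI _ (W t 0)); rewrite -WDr !addr0. Qed.

Lemma formNl p t : W (- p) t = - W p t.
Proof. by apply/eqP; rewrite -addr_eq0 -WDl addNr form0l. Qed.

Lemma formNr t p : W t (- p) = - W t p.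
Proof. by apply/eqP; rewrite -addr_eq0 -WDr addNr form0r. Qed.

Lemma form_skew p q : W p q = - W q p.
Proof.
apply/eqP; rewrite -addr_eq0.
by have := Walt (p + q); rewrite WDl !WDr !Walt add0r addr0 => ->.
Qed.

Variable r : V.

Definition cocycle (a : V -> K) := forall s t, s + t + r != 0 ->
  W s t * a (s + t) = a s * W (s + r) t + a t * W s (t + r).

Lemma cocycleE a : cocycle a -> forall s t, s + t + r != 0 ->
  W s t * (a (s + t) - a s - a t) = a s * W r t - a t * W r s.
Proof. by move=> ca s t str; rewrite !mulrBr ca // WDl WDr (form_skew s r); ring. Qed.

Lemma cocycle_sub a b : cocycle a -> cocycle b -> cocycle (fun s => a s - b s).
Proof. by move=> ca cb s t str; rewrite mulrBr ca // cb //; ring. Qed.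

Lemma cocycle_inner c : cocycle (fun s => c * W r s).
Proof. by move=> s t _; rewrite !WDr WDl (form_skew s r); ring. Qed.

Lemma form_neq0l p q : W p q != 0 -> p != 0.
Proof. by apply: contraNneq => ->; rewrite form0l. Qed.

Lemma form_neq0_shift u : W r u != 0 -> u + r != 0.
Proof.
move=> Wu; apply: contraNneq Wu => /eqP; rewrite addr_eq0 => /eqP ->.
by rewrite formNr Walt oppr0.
Qed.

Hypothesis two_neq0 : (2 : K) != 0.

Section Vanishing.

Variable b : V -> K.
Hypothesis cb : cocycle b.

Lemma cocycle_vanishN u : W r u != 0 -> b u = 0 -> b (- u) = 0.
Proof.
move=> Wu bu; have := cocycleE cb (s:=u) (t:=- u); rewrite subrr add0r.
move=> /(_ (form_neq0l Wu)); rewrite formNr Walt oppr0 !mul0r bu mul0r sub0r.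
by move/esym/eqP; rewrite oppr_eq0 mulf_eq0 (negbTE Wu) orbF => /eqP.
Qed.

Lemma cocycle_vanishD u : W r u != 0 -> b u = 0 -> b (u + u) = 0.
Proof.
move=> Wu bu; have := cocycleE cb (s:=- u) (t:=u + u); rewrite addrA addNr add0r.
move=> /(_ (form_neq0_shift Wu)); rewrite formNl WDr Walt addr0 oppr0 mul0r.
rewrite (cocycle_vanishN Wu bu) mul0r sub0r formNr mulrN opprK.
by move/esym/eqP; rewrite mulf_eq0 (negbTE Wu) orbF => /eqP.
Qed.

Lemma cocycle_vanish_shift u s : W r u != 0 -> b u = 0 -> b (u + u) = 0 ->
  s + r != 0 -> s + u + r != 0 -> b s = 0.
Proof.
move=> Wu bu b2u sr sur.
have e1 := cocycleE cb sur; rewrite bu subr0 mul0r subr0 in e1.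
have e2 : W s u * (b s - b (s - u)) = b (s - u) * W r u.
  have := cocycleE cb (s:=s - u) (t:=u); rewrite subrK => /(_ sr).
  by rewrite bu WDl formNl Walt oppr0 !addr0 mul0r subr0.
have e3 : W s u * (b (s + u) - b (s - u)) = b (s - u) * W r u.
  have := cocycleE cb (s:=s - u) (t:=u + u); rewrite addrA subrK => /(_ sur).
  rewrite b2u subr0 mul0r subr0 WDr WDl formNl Walt oppr0 addr0.
  move=> e; apply: (mulfI two_neq0); rewrite WDr in e.
  transitivity ((W s u + W s u) * (b (s + u) - b (s - u))); first by ring.
  by rewrite e; ring.
have : b s * W r u = 0.
  rewrite -e1; transitivity (W s u * (b (s + u) - b (s - u)) - W s u * (b s - b (s - u))).
    by ring.
  by rewrite e2 e3 subrr.
by move/eqP; rewrite mulf_eq0 (negbTE Wu) orbF => /eqP.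
Qed.

Lemma cocycle_vanish v s : W r v != 0 -> b v = 0 -> s + r != 0 -> b s = 0.
Proof.
move=> Wv bv sr.
have [svr|svr] := eqVneq (s + v + r) 0; last first.
  by apply: (cocycle_vanish_shift Wv bv) => //; apply: cocycle_vanishD.
have Wv' : W r (- v) != 0 by rewrite formNr oppr_eq0.
have bv' := cocycle_vanishN Wv bv.
apply: (cocycle_vanish_shift Wv' bv' (cocycle_vanishD Wv' bv') sr).
apply: contraNneq Wv => s_v_r.
have e : W r (s + v + r) - W r (s - v + r) = 0 by rewrite svr s_v_r subrr.
have : 2 * W r v = 0 by move: e; rewrite !WDr formNr => <-; ring.
by move/eqP; rewrite mulf_eq0 (negbTE two_neq0).
Qed.

End Vanishing.

Lemma cocycle_eq_inner a v s : cocycle a -> W r v != 0 -> s + r != 0 ->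
  a s = a v / W r v * W r s.
Proof.
move=> ca Wv sr; apply/eqP; rewrite -subr_eq0; apply/eqP.
pose c := a v / W r v.
apply: (cocycle_vanish (cocycle_sub ca (cocycle_inner c)) Wv _ sr).
by rewrite /c divfK // subrr.
Qed.

End AlternatingForm.

Lemma intr_eq0_pchar0 (K : idomainType) (z : int) :
  [pchar K] =i pred0 -> (z%:~R == 0 :> K) = (z == 0).
Proof. by move=> /pcharf0P K0; case: z => n; rewrite ?NegzE ?mulrNz ?oppr_eq0 /= K0. Qed.

Lemma zformDl n (a b c : 'rV[int]_n) : zform (a + b) c = zform a c + zform b c.
Proof. by rewrite /zform -big_split; apply: eq_bigr => i _; rewrite mxE mulrDl. Qed.

Lemma zformDr n (a b c : 'rV[int]_n) : zform c (a + b) = zform c a + zform c b.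
Proof. by rewrite /zform -big_split; apply: eq_bigr => i _; rewrite mxE mulrDr. Qed.

Lemma zform_self_eq0 n (a : 'rV[int]_n) : (zform a a == 0) = (a == 0).
Proof.
apply/idP/eqP => [|->]; last by rewrite /zform big1 // => i _; rewrite mxE mul0r.
rewrite psumr_eq0 => [/allP a0|i _]; last by rewrite -expr2 sqr_ge0.
apply/rowP => i; rewrite mxE.
by have := a0 i (mem_index_enum i); rewrite implyTb mulf_eq0 orbb => /eqP.
Qed.

Lemma JbarD m (p q : ZN m) : Jbar (p + q) = Jbar p + Jbar q.
Proof. by rewrite /Jbar !linearD /= add_row_mx. Qed.

Lemma Jbar_eq0 m (p : ZN m) : (Jbar p == 0) = (p == 0).
Proof. by rewrite -{2}(hsubmxK p) !row_mx_eq0 oppr_eq0 andbC. Qed.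

Lemma zform_Jbar_self m (p : ZN m) : zform (Jbar p) p = 0.
Proof.
rewrite /zform big_split_ord /= -big_split big1 // => i _.
by rewrite /Jbar row_mxEl row_mxEr !mxE /= mulNr mulrC subrr.
Qed.

Definition sform (K : pzRingType) m (p q : ZN m) : K := (zform (Jbar p) q)%:~R.
Arguments sform K {m}.

Section SymplecticForm.

Variables (K : pzRingType) (m : nat).

Lemma sformDl (p q t : ZN m) : sform K (p + q) t = sform K p t + sform K q t.
Proof. by rewrite /sform JbarD zformDl intrD. Qed.

Lemma sformDr (t p q : ZN m) : sform K t (p + q) = sform K t p + sform K t q.
Proof. by rewrite /sform zformDr intrD. Qed.

Lemma sform_alt (p : ZN m) : sform K p p = 0.
Proof. by rewrite /sform zform_Jbar_self. Qed.

End SymplecticForm.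

Lemma sform_Jbar_neq0 (K : idomainType) m (r : ZN m) :
  [pchar K] =i pred0 -> r != 0 -> sform K r (Jbar r) != 0.
Proof. by move=> K0 rnz; rewrite /sform intr_eq0_pchar0 // zform_self_eq0 Jbar_eq0. Qed.

Lemma linear_scale (R : pzRingType) (U V : lmodType R) (f : U -> V) :
  linear f -> forall a x, f (a *: x) = a *: f x.
Proof.
move=> fL a x; pose F : {linear U -> V} := HB.pack f (GRing.isLinear.Build _ _ _ _ f fL).
exact: (linearZ_LR F).
Qed.

Lemma linear_sum_scale (R : pzRingType) (U V : lmodType R) (f : U -> V)
    (I : Type) (s : seq I) (c : I -> R) (g : I -> U) :
  linear f -> f (\sum_(i <- s) c i *: g i) = \sum_(i <- s) c i *: f (g i).
Proof.
move=> fL; pose F : {linear U -> V} := HB.pack f (GRing.isLinear.Build _ _ _ _ f fL).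
by rewrite -[f _]/(F _) linear_sum; apply: eq_bigr => i _; apply: linearZ_LR.
Qed.

Lemma has_degree_coef (K : fieldType) m (L : lmodType K) (h : ZN m -> L)
    (d : L -> L) (r : ZN m) :
  has_degree h d r -> exists a : ZN m -> K, forall s, d (h s) = a s *: h (s + r).
Proof.
move=> hd; have ex s : exists a, d (h s) == a *: h (s + r) by have [a ->] := hd s; exists a.
by exists (fun s => xchoose (ex s)) => s; apply/eqP/(xchooseP (ex s)).
Qed.

Section HN.

Variables (K : fieldType) (m : nat) (L : lmodType K) (h : ZN m -> L) (br : L -> L -> L).
Hypothesis HN : is_HN' h br.

Lemma HN_scale_inj u (x y : K) : u != 0 -> x *: h u = y *: h u -> x = y.
Proof.
have [_ _ hind _ _] := HN; move=> unz e; apply/eqP; rewrite -subr_eq0; apply/eqP.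
apply: (hind [:: u] (fun _ => x - y)); rewrite ?mem_seq1 //= ?unz //.
by rewrite big_seq1 scalerBl e subrr.
Qed.

Lemma HN_linear_ext (f g : L -> L) : linear f -> linear g ->
  (forall u, f (h u) = g (h u)) -> f =1 g.
Proof.
have [_ hspan _ _ _] := HN; move=> fL gL fg x; have [s [c ->]] := hspan x.
by rewrite !linear_sum_scale //; apply: eq_bigr => u _; rewrite fg.
Qed.

Lemma HN_linear_brl z : linear (br^~ z).
Proof. by have [_ _ _ [brl _] _] := HN; move=> a x y; apply: brl. Qed.

Lemma HN_linear_brr z : linear (br z).
Proof. by have [_ _ _ [_ brr] _] := HN; move=> a x y; apply: brr. Qed.

Lemma HN_brZl a x z : br (a *: x) z = a *: br x z.
Proof. exact: (linear_scale (HN_linear_brl z)). Qed.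

Lemma HN_brZr a x z : br z (a *: x) = a *: br z x.
Proof. exact: (linear_scale (HN_linear_brr z)). Qed.

Lemma derivation_coef_cocycle (d : L -> L) (r : ZN m) (a : ZN m -> K) :
  is_derivation br d -> (forall s, d (h s) = a s *: h (s + r)) ->
  cocycle (sform K) r a.
Proof.
have [_ _ _ _ hbr] := HN; move=> [dL dder] ha s t str.
apply: (HN_scale_inj str); have := dder (h s) (h t).
rewrite hbr linear_scale // !ha HN_brZl HN_brZr !hbr !scalerA.
by rewrite (addrAC s r t) (addrA s t r) -scalerDl.
Qed.

End HN.

Theorem lemma4p3 (K : closedFieldType) (m : nat) (L : lmodType K)
    (h : ZN m -> L) (br : L -> L -> L) :
  [pchar K] =i pred0 -> (0 < m)%N ->
  is_HN' h br ->
  forall (r : ZN m), r != 0 ->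
  forall d : L -> L, is_derivation br d -> has_degree h d r ->
  exists c : K, forall x : L, d x = br (c *: h r) x.
Proof.
move=> K0 _ HN r rnz d dder ddeg.
have [h0 _ _ _ hbr] := HN.
have [a ha] := has_degree_coef ddeg.
have acoc := derivation_coef_cocycle HN dder ha.
have two_neq0 : (2 : K) != 0 by move/pcharf0P: K0 => ->.
have Wv := sform_Jbar_neq0 K0 rnz.
exists (a (Jbar r) / sform K r (Jbar r)).
apply: (HN_linear_ext HN dder.1 (HN_linear_brr HN _)) => u.
rewrite ha (HN_brZl HN) hbr scalerA (addrC r u).
have [->|ur] := eqVneq (u + r) 0; first by rewrite h0 !scaler0.
by rewrite -(cocycle_eq_inner (@sformDl K m) (@sformDr K m) (@sform_alt K m)
               two_neq0 acoc Wv ur).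
Qed.
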